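(* Let $\frac12<p<1$ and let $f:\mathbb{Z}^+\to[0,\infty)$ be monotonically increasing (non-decreasing). Let $\{N_j\}_{j\ge0}$ be the discrete-time, time-inhomogeneous Markov chain on $\mathbb{N}$ with $N_0=1$, $N_1\sim\mathrm{Bern}\big(\frac{1-p}{p}\big)$, and, for $j\ge1$, conditionally on $N_j$, $N_{j+1}\sim\mathrm{Bin}\big(N_j,\frac{1-p}{p}\big)+\mathrm{Poiss}\big(\frac{1-p}{p}f(j)\big)$ with independent summands. Let $\mathbf{E}^*$ denote expectation for this chain and $K=\#\{j\in\mathbb{Z}^+:N_j=0\}$. If $$\sum_{j=1}^{\infty}e^{-\frac{1-p}{2p-1}f(j)}=\infty,$$ then $\mathbf{E}^*[K]=\infty$. *)

From Stdlib Require Import Reals Arith.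
From Coquelicot Require Import Coquelicot.
Open Scope R_scope.

Definition qpar (p : R) : R := (1 - p) / p.

Definition binom_pmf (n : nat) (r : R) (k : nat) : R :=
  if (k <=? n)%nat then Binomial.C n k * r ^ k * (1 - r) ^ (n - k) else 0.

Definition poiss_pmf (l : R) (k : nat) : R :=
  exp (- l) * l ^ k / INR (fact k).

(* transition probability P(N_{j+1} = m | N_j = n) for j >= 1:
   Bin(n, q) + Poiss(q f(j)), independent summands (convolution) *)
Definition trans (p : R) (f : nat -> R) (j n m : nat) : R :=
  sum_f_R0 (fun k => binom_pmf n (qpar p) k * poiss_pmf (qpar p * f j) (m - k)) m.

(* law p f j n = P*(N_j = n) *)
Fixpoint law (p : R) (f : nat -> R) (j : nat) : nat -> R :=
  match j with
  | O => fun n => if (n =? 1)%nat then 1 else 0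
  | S j' =>
      match j' with
      | O => fun m => if (m =? 0)%nat then 1 - qpar p
                      else if (m =? 1)%nat then qpar p else 0
      | _ => fun m => Series (fun n => law p f j' n * trans p f j' n m)
      end
  end.

(* E*[K] where K = #{j >= 1 : N_j = 0}; E*[K] = sum_{j>=1} P*(N_j = 0) *)
Definition ExpK (p : R) (f : nat -> R) : Rbar :=
  Lim_seq (fun n => sum_f_R0 (fun j => law p f (S j) 0%nat) n).

From Stdlib Require Import Reals Lra Lia.
From Coquelicot Require Import Coquelicot.
Open Scope R_scope.

(* Write q = (1-p)/p < 1.  Conditioning on N_j, the generating function of N_(j+1)
   at s is exp(q f(j) (s-1)) times that of N_j at 1 - q + q s.  By induction,
   E s^(N_(k+1)) = (1 - q^(k+1) (1-s)) exp(-L_k (1-s)) with L_0 = 0 and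
   L_k = q (L_(k-1) + f(k)), so P(N_(k+1) = 0) = (1 - q^(k+1)) exp(-L_k).
   As f is nondecreasing, L_k <= q/(1-q) f(k+1) = (1-p)/(2p-1) f(k+1), hence
   E K = sum_k P(N_k = 0) dominates (1-q) times the divergent series. *)

Lemma sum_n_nonneg (a : nat -> R) N : (forall n, 0 <= a n) -> 0 <= sum_n a N.
Proof.
  intros Ha. induction N as [|N IH]; [rewrite sum_O; auto|].
  rewrite sum_Sn. unfold plus; simpl. specialize (Ha (S N)). lra.
Qed.

Lemma sum_n_incr (a : nat -> R) N : (forall n, 0 <= a n) -> sum_n a N <= sum_n a (S N).
Proof. intros Ha. rewrite sum_Sn. unfold plus; simpl. specialize (Ha (S N)). lra. Qed.

Lemma is_series_le_bound (a : nat -> R) (l M : R) :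
  is_series a l -> (forall N, sum_n a N <= M) -> l <= M.
Proof.
  intros Hl HM. change (Rbar_le l M).
  apply (is_lim_seq_le (sum_n a) (fun _ => M)); [exact HM|exact Hl|apply is_lim_seq_const].
Qed.

Lemma sum_n_le_lim (a : nat -> R) (l : Rbar) :
  (forall n, 0 <= a n) -> is_lim_seq (sum_n a) l -> forall N, Rbar_le (sum_n a N) l.
Proof.
  intros Ha Hl N.
  apply (is_lim_seq_le_loc (fun _ => sum_n a N) (sum_n a)); [|apply is_lim_seq_const|exact Hl].
  exists N. intros n Hn. induction Hn as [|n Hn IH]; [lra|].
  pose proof (sum_n_incr a n Ha). lra.
Qed.

Lemma is_series_partial_le (a : nat -> R) (l : R) :
  (forall n, 0 <= a n) -> is_series a l -> forall N, sum_n a N <= l.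
Proof. intros Ha Hl. exact (sum_n_le_lim a l Ha Hl). Qed.

Lemma is_series_term_le (a : nat -> R) (l : R) :
  (forall n, 0 <= a n) -> is_series a l -> forall n, a n <= l.
Proof.
  intros Ha Hl n. eapply Rle_trans; [|apply (is_series_partial_le a l Ha Hl n)].
  destruct n as [|n]; [rewrite sum_O; lra|].
  rewrite sum_Sn. unfold plus; simpl. pose proof (sum_n_nonneg a n Ha). lra.
Qed.

Lemma ex_series_partial_bounded (a : nat -> R) (M : R) :
  (forall n, 0 <= a n) -> (forall N, sum_n a N <= M) -> ex_series a.
Proof.
  intros Ha HM.
  destruct (ex_lim_seq_incr (sum_n a) (fun n => sum_n_incr a n Ha)) as [l Hl].
  assert (Hup : Rbar_le l M).
  { apply (is_lim_seq_le (sum_n a) (fun _ => M)); auto. apply is_lim_seq_const. }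
  pose proof (sum_n_le_lim a l Ha Hl 0) as Hlow.
  destruct l as [l| |]; simpl in *; try contradiction.
  exists l. exact Hl.
Qed.

Lemma is_series_sum_n (a : nat -> nat -> R) (A : nat -> R) N :
  (forall i, is_series (a i) (A i)) ->
  is_series (fun m => sum_n (fun i => a i m) N) (sum_n A N).
Proof.
  intros H. induction N as [|N IH].
  - rewrite sum_O. eapply is_series_ext; [|apply H]. intro; now rewrite sum_O.
  - rewrite sum_Sn. eapply is_series_ext; [|exact (is_series_plus _ _ _ _ IH (H (S N)))].
    intro m. now rewrite sum_Sn.
Qed.

Lemma is_series_finite_support (a : nat -> R) n :
  (forall k, (n < k)%nat -> a k = 0) -> is_series a (sum_n a n).
Proof.
  intros H. change (is_lim_seq (sum_n a) (sum_n a n)).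
  apply (is_lim_seq_ext_loc (fun _ => sum_n a n)); [|apply is_lim_seq_const].
  exists n. intros N HN. induction HN as [|N HN IH]; [reflexivity|].
  rewrite sum_Sn, (H (S N)), <- IH by lia. exact (eq_sym (plus_zero_r _)).
Qed.

Lemma is_series_swap_nonneg (a : nat -> nat -> R) (A : nat -> R) (T : R) :
  (forall n m, 0 <= a n m) -> (forall n, is_series (a n) (A n)) -> is_series A T ->
  is_series (fun m => Series (fun n => a n m)) T.
Proof.
  intros Hpos HA HT.
  assert (HA0 : forall n, 0 <= A n).
  { intro n. apply (Rle_trans _ _ _ (Hpos n 0%nat)), (is_series_term_le (a n)); auto. }
  assert (Hcol : forall m, ex_series (fun n => a n m)).
  { intro m. apply (@ex_series_le R_AbsRing R_CompleteNormedModule _ A); [|exists T; exact HT].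
    intro n. unfold norm; simpl. rewrite Rabs_pos_eq by auto.
    apply (is_series_term_le (a n)); auto. }
  set (B := fun m => Series (fun n => a n m)).
  assert (Hrows : forall N, is_series (fun m => sum_n (fun n => a n m) N) (sum_n A N))
    by (intro; apply (is_series_sum_n a); auto).
  assert (Hcols : forall M, is_series (fun n => sum_n (fun m => a n m) M) (sum_n B M))
    by (intro; apply (is_series_sum_n (fun m n => a n m)); intro; apply Series_correct, Hcol).
  assert (HB_le : forall M, sum_n B M <= T).
  { intro M. apply (is_series_le_bound _ _ _ (Hcols M)). intro N.
    apply (Rle_trans _ (sum_n A N)); [|apply is_series_partial_le; auto].
    apply sum_n_m_le. intro n. apply (is_series_partial_le (a n)); auto. }
  assert (HB : ex_series B).
  { apply (ex_series_partial_bounded B T); auto.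
    intro m. apply (Rle_trans _ _ _ (Hpos 0%nat m)), (is_series_term_le (fun n => a n m)); auto.
    apply Series_correct, Hcol. }
  replace T with (Series B); [apply Series_correct, HB|].
  apply Rle_antisym; [apply (is_series_le_bound B); [apply Series_correct|]; auto|].
  apply (is_series_le_bound A); [exact HT|]. intro N.
  rewrite <- (is_series_unique _ _ (Hrows N)). apply Series_le; auto.
  intro m. split; [apply sum_n_nonneg; auto|].
  apply (is_series_partial_le (fun n => a n m)); auto. apply Series_correct, Hcol.
Qed.

Lemma binom_pmf_nonneg n r k : 0 <= r <= 1 -> 0 <= binom_pmf n r k.
Proof.
  intros Hr. unfold binom_pmf. destruct (k <=? n)%nat; [|lra].
  assert (HC : 0 <= Binomial.C n k).
  { unfold Binomial.C. apply Rmult_le_pos; [apply pos_INR|].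
    left. apply Rinv_0_lt_compat, Rmult_lt_0_compat; apply INR_fact_lt_0. }
  apply Rmult_le_pos; [apply Rmult_le_pos|]; [exact HC|apply pow_le; lra|apply pow_le; lra].
Qed.

Lemma poiss_pmf_nonneg l k : 0 <= l -> 0 <= poiss_pmf l k.
Proof.
  intros Hl. unfold poiss_pmf. apply Rmult_le_pos; [apply Rmult_le_pos|].
  - left. apply exp_pos.
  - apply pow_le. exact Hl.
  - left. apply Rinv_0_lt_compat, INR_fact_lt_0.
Qed.

Lemma trans_nonneg p f j n m : 0 <= qpar p <= 1 -> 0 <= f j -> 0 <= trans p f j n m.
Proof.
  intros Hq Hf. unfold trans. apply cond_pos_sum. intro k.
  apply Rmult_le_pos; [apply binom_pmf_nonneg; exact Hq|].
  apply poiss_pmf_nonneg, Rmult_le_pos; lra.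
Qed.

Lemma binom_pmf_pgf n r s :
  is_series (fun k => binom_pmf n r k * s ^ k) ((1 - r + r * s) ^ n).
Proof.
  replace ((1 - r + r * s) ^ n) with (sum_n (fun k => binom_pmf n r k * s ^ k) n).
  - apply is_series_finite_support. intros k Hk. unfold binom_pmf.
    replace (k <=? n)%nat with false by (symmetry; apply Nat.leb_gt; lia). ring.
  - rewrite sum_n_Reals. replace (1 - r + r * s) with (r * s + (1 - r)) by ring.
    rewrite binomial. apply sum_eq. intros i Hi. unfold binom_pmf.
    replace (i <=? n)%nat with true by (symmetry; apply Nat.leb_le; lia).
    rewrite Rpow_mult_distr. ring.
Qed.

Lemma poiss_pmf_pgf l s :
  is_series (fun k => poiss_pmf l k * s ^ k) (exp (l * (s - 1))).
Proof.
  replace (exp (l * (s - 1))) with (exp (- l) * exp (l * s))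
    by (rewrite <- exp_plus; f_equal; ring).
  eapply is_series_ext; [|exact (is_series_scal_l (exp (- l)) _ _ (is_exp_Reals (l * s)))].
  intro k. unfold scal; simpl; unfold mult; simpl.
  rewrite pow_n_pow. unfold poiss_pmf. rewrite Rpow_mult_distr. unfold Rdiv. ring.
Qed.

Lemma trans_pgf p f j n s : 0 <= qpar p <= 1 -> 0 <= f j -> 0 <= s ->
  is_series (fun m => trans p f j n m * s ^ m)
    ((1 - qpar p + qpar p * s) ^ n * exp (qpar p * f j * (s - 1))).
Proof.
  intros Hq Hf Hs.
  assert (Hl : 0 <= qpar p * f j) by (apply Rmult_le_pos; lra).
  eapply is_series_ext;
    [|apply (is_series_mult_pos _ _ _ _ (binom_pmf_pgf n (qpar p) s)
                                       (poiss_pmf_pgf (qpar p * f j) s))].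
  - intro m. unfold trans. rewrite (Rmult_comm _ (s ^ m)), scal_sum. apply sum_eq.
    intros i Hi. replace (s ^ m) with (s ^ i * s ^ (m - i)) by (rewrite <- pow_add; f_equal; lia).
    ring.
  - intro k. apply Rmult_le_pos; [apply binom_pmf_nonneg; exact Hq|apply pow_le; exact Hs].
  - intro k. apply Rmult_le_pos; [apply poiss_pmf_nonneg; exact Hl|apply pow_le; exact Hs].
Qed.

(* No convergence is needed: [Series] of a divergent series is the junk value [0]. *)
Lemma Series_nonneg (a : nat -> R) : (forall n, 0 <= a n) -> 0 <= Series a.
Proof.
  intros Ha.
  destruct (ex_lim_seq_incr (sum_n a) (fun n => sum_n_incr a n Ha)) as [l Hl].
  unfold Series. rewrite (is_lim_seq_unique _ _ Hl).
  pose proof (sum_n_le_lim a l Ha Hl 0) as Hlow. pose proof (Ha 0%nat).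
  rewrite sum_O in Hlow. destruct l as [l| |]; simpl in *; lra.
Qed.

Lemma exp_le_compat x y : x <= y -> exp x <= exp y.
Proof. intros [H | ->]; [left; apply exp_increasing, H|right; reflexivity]. Qed.

Lemma sum_f_R0_diverge_le (a b : nat -> R) (c : R) :
  0 < c -> (forall j, 0 <= a j) -> (forall j, c * a j <= b j) ->
  Lim_seq (fun n => sum_f_R0 a n) = p_infty -> Lim_seq (fun n => sum_f_R0 b n) = p_infty.
Proof.
  intros Hc Ha Hab Hdiv.
  assert (Hlim : is_lim_seq (fun n => sum_f_R0 a n) p_infty).
  { rewrite <- Hdiv. apply Lim_seq_correct, ex_lim_seq_incr. intro n. simpl.
    specialize (Ha (S n)). lra. }
  apply is_lim_seq_unique, (is_lim_seq_le_p_loc (fun n => c * sum_f_R0 a n)).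
  - exists 0%nat. intros n _. rewrite scal_sum. apply sum_Rle. intros j _.
    rewrite Rmult_comm. apply Hab.
  - pose proof (is_lim_seq_scal_l _ c _ Hlim) as H. simpl in H.
    destruct (Rle_dec 0 c) as [Hc0|]; [|lra].
    destruct (Rle_lt_or_eq_dec 0 c Hc0); [exact H|lra].
Qed.

(* [poiss_rate p f k] is L_k: N_(k+1) is the initial individual, still present with
   probability q^(k+1), plus an independent Poisson number of immigrants' descendants. *)
Fixpoint poiss_rate (p : R) (f : nat -> R) (k : nat) : R :=
  match k with O => 0 | S k' => qpar p * (poiss_rate p f k' + f (S k')) end.

Definition law_pgf (p : R) (f : nat -> R) (k : nat) (s : R) : R :=
  (1 - qpar p ^ S k + qpar p ^ S k * s) * exp (- poiss_rate p f k * (1 - s)).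

Lemma law_SS p f k m :
  law p f (S (S k)) m = Series (fun n => law p f (S k) n * trans p f (S k) n m).
Proof. reflexivity. Qed.

Lemma law_pgf_S p f k s :
  law_pgf p f (S k) s =
  exp (qpar p * f (S k) * (s - 1)) * law_pgf p f k (1 - qpar p + qpar p * s).
Proof.
  unfold law_pgf. simpl poiss_rate. rewrite (Rmult_comm (exp _)), Rmult_assoc, <- exp_plus.
  f_equal; [simpl; ring|f_equal; ring].
Qed.

Section Chain.

Variables (p : R) (f : nat -> R).
Hypothesis hq : 0 <= qpar p <= 1.
Hypothesis hf0 : forall j : nat, (1 <= j)%nat -> 0 <= f j.

Lemma law_nonneg k m : 0 <= law p f (S k) m.
Proof.
  revert m. induction k as [|k IH]; intro m.
  - simpl. destruct (m =? 0)%nat; [lra|]. destruct (m =? 1)%nat; lra.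
  - rewrite law_SS. apply Series_nonneg. intro n.
    apply Rmult_le_pos; [apply IH|apply trans_nonneg, hf0; [exact hq|lia]].
Qed.

Lemma law_one_pgf s : is_series (fun m => law p f 1 m * s ^ m) (law_pgf p f 0 s).
Proof.
  replace (law_pgf p f 0 s) with (sum_n (fun m => law p f 1 m * s ^ m) 1).
  - apply is_series_finite_support. intros k Hk. simpl.
    replace (k =? 0)%nat with false by (symmetry; apply Nat.eqb_neq; lia).
    replace (k =? 1)%nat with false by (symmetry; apply Nat.eqb_neq; lia). ring.
  - rewrite sum_Sn, sum_O. unfold law_pgf, plus; simpl.
    replace (- 0 * (1 - s)) with 0 by ring. rewrite exp_0. ring.
Qed.

Lemma law_pgf_correct k s :
  0 <= s <= 1 -> is_series (fun m => law p f (S k) m * s ^ m) (law_pgf p f k s).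
Proof.
  revert s. induction k as [|k IH]; intros s Hs; [apply law_one_pgf|].
  assert (Hf : 0 <= f (S k)) by (apply hf0; lia).
  set (h := 1 - qpar p + qpar p * s).
  set (E := exp (qpar p * f (S k) * (s - 1))).
  assert (Hh : 0 <= h <= 1) by (unfold h; split; nra).
  rewrite law_pgf_S.
  apply (is_series_ext (fun m => Series (fun n => law p f (S k) n * trans p f (S k) n m * s ^ m))).
  { intro m. rewrite law_SS, <- Series_scal_r. reflexivity. }
  (* Sum first over the previous generation: given [N = n], the next one has
     generating function [h ^ n * E]. *)
  apply (is_series_swap_nonneg _ (fun n => law p f (S k) n * (h ^ n * E))).
  - intros n m. apply Rmult_le_pos; [apply Rmult_le_pos|apply pow_le; lra].
    + apply law_nonneg.
    + apply trans_nonneg; assumption.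
  - intro n. eapply is_series_ext;
      [|exact (is_series_scal_l (law p f (S k) n) _ _ (trans_pgf p f (S k) n s hq Hf (proj1 Hs)))].
    intro m. unfold scal; simpl; unfold mult; simpl. ring.
  - eapply is_series_ext; [|exact (is_series_scal_l E _ _ (IH h Hh))].
    intro m. unfold scal; simpl; unfold mult; simpl. ring.
Qed.

Lemma law_zero k : law p f (S k) 0 = (1 - qpar p ^ S k) * exp (- poiss_rate p f k).
Proof.
  assert (H0 : is_series (fun m => law p f (S k) m * 0 ^ m) (law p f (S k) 0)).
  { replace (law p f (S k) 0) with (sum_n (fun m => law p f (S k) m * 0 ^ m) 0)
      by (rewrite sum_O; simpl; ring).
    apply is_series_finite_support. intros [|m] Hm; [lia|]. simpl. ring. }
  rewrite <- (is_series_unique _ _ H0), (is_series_unique _ _ (law_pgf_correct k 0 ltac:(lra))).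
  unfold law_pgf. f_equal; [ring|f_equal; ring].
Qed.

End Chain.

Lemma poiss_rate_le p f :
  0 <= qpar p < 1 ->
  (forall j : nat, (1 <= j)%nat -> 0 <= f j) ->
  (forall i j : nat, (1 <= i)%nat -> (i <= j)%nat -> f i <= f j) ->
  forall k, poiss_rate p f k <= qpar p / (1 - qpar p) * f (S k).
Proof.
  intros Hq hf0 hfmon k.
  assert (Hc : 0 <= qpar p / (1 - qpar p)) by (apply Rdiv_le_0_compat; lra).
  induction k as [|k IH]; simpl poiss_rate.
  - assert (0 <= f 1%nat) by (apply hf0; lia). nra.
  - assert (f (S k) <= f (S (S k))) by (apply hfmon; lia).
    assert (0 <= f (S k)) by (apply hf0; lia).
    (* the bound is the fixed point of [L |-> q (L + f)] *)
    replace (qpar p / (1 - qpar p) * f (S (S k)))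
      with (qpar p * (qpar p / (1 - qpar p) * f (S (S k)) + f (S (S k)))) by (field; lra).
    apply Rmult_le_compat_l; [lra|].
    assert (qpar p / (1 - qpar p) * f (S k) <= qpar p / (1 - qpar p) * f (S (S k)))
      by (apply Rmult_le_compat_l; lra).
    lra.
Qed.

Lemma law_zero_lower p f k :
  0 <= qpar p < 1 ->
  (forall j : nat, (1 <= j)%nat -> 0 <= f j) ->
  (forall i j : nat, (1 <= i)%nat -> (i <= j)%nat -> f i <= f j) ->
  (1 - qpar p) * exp (- (qpar p / (1 - qpar p)) * f (S k)) <= law p f (S k) 0.
Proof.
  intros Hq hf0 hfmon.
  rewrite law_zero by (auto; lra).
  apply Rmult_le_compat; [lra|left; apply exp_pos| |].
  - assert (0 <= qpar p ^ k <= 1).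
    { split; [apply pow_le; lra|rewrite <- (pow1 k); apply pow_incr; lra]. }
    simpl. nra.
  - apply exp_le_compat. pose proof (poiss_rate_le p f Hq hf0 hfmon k). lra.
Qed.

Theorem proposition6 (p : R) (f : nat -> R)
  (hp1 : 1 / 2 < p) (hp2 : p < 1)
  (hf0 : forall j : nat, (1 <= j)%nat -> 0 <= f j)
  (hfmon : forall i j : nat, (1 <= i)%nat -> (i <= j)%nat -> f i <= f j)
  (hdiv : Lim_seq (fun n => sum_f_R0
            (fun j => exp (- ((1 - p) / (2 * p - 1)) * f (S j))) n) = p_infty) :
  ExpK p f = p_infty.
Proof.
  assert (Hq : 0 < qpar p < 1).
  { unfold qpar. split; [apply Rdiv_lt_0_compat; lra|].
    apply Rmult_lt_reg_r with p; [lra|]. field_simplify; lra. }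
  assert (Hrate : (1 - p) / (2 * p - 1) = qpar p / (1 - qpar p))
    by (unfold qpar; field; lra).
  rewrite Hrate in hdiv.
  refine (sum_f_R0_diverge_le _ _ (1 - qpar p) _ _ _ hdiv).
  - lra.
  - intro j. left. apply exp_pos.
  - intro j. apply law_zero_lower; auto; lra.
Qed.
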